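(* Consider the following system with wavelength $\lambda>0$. A user equipment (UE) carries a uniform linear array of $K$ antennas located at $\mathbf{u}_k=\mathbf{u}+(k-1)d_u\mathbf{g}$, $k=1,\dots,K$, where $\mathbf{u}=r[\cos\theta,\sin\theta,0]^T\in\mathbb{R}^3$ is the UE location, $d_u>0$ is the inter-antenna spacing and $\mathbf{g}=[0,1,0]^T$. A reconfigurable intelligent surface (RIS) has $N=N_yN_z$ elements located at $\mathbf{s}_n=\mathbf{s}+[0,(n_y-1)d_y,(n_z-1)d_z]^T$, with $n=(n_y-1)N_y+n_z$, $n_y=1,\dots,N_y$, $n_z=1,\dots,N_z$, where $\mathbf{s}\in\mathbb{R}^3$ is the RIS location and $d_y,d_z>0$. Let $\mathbf{A}\in\mathbb{C}^{N\times K}$ be the UE–RIS channel matrix with entries $A_{n,k}=\exp\!\big(-j2\pi\|\mathbf{u}_k-\mathbf{s}_n\|/\lambda\big)$. The UE transmits a reference matrix $\mathbf{S}\in\mathbb{C}^{K\times L}$ with $\mathbf{S}\mathbf{S}^H=(P_T/K)\mathbf{I}_K$ ($P_T>0$) and receives $\mathbf{Y}=\mathbf{A}^H\boldsymbol{\Omega}\mathbf{A}\mathbf{S}+\mathbf{W}$, where $\boldsymbol{\Omega}=\operatorname{diag}(e^{j\omega_1},\dots,e^{j\omega_N})$ with $\omega_n\in[0,2\pi]$ is the RIS phase-shift matrix and $\mathbf{W}$ is noise. The received SNR is $\mathrm{SNR}=\|\mathbf{A}^H\boldsymbol{\Omega}\mathbf{A}\mathbf{S}\|_F^2/\|\mathbf{W}\|_F^2=\frac{P_T}{K}\|\mathbf{A}^H\boldsymbol{\Omega}\mathbf{A}\|_F^2/\|\mathbf{W}\|_F^2$.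 Then, regardless of the UE location $\mathbf{u}$ (i.e. for every $r,\theta$), the matrix $\boldsymbol{\Omega}_*=\mathbf{I}_N$ is an optimal solution of $\max_{\boldsymbol{\Omega}\in\mathcal{O}}\|\mathbf{A}^H\boldsymbol{\Omega}\mathbf{A}\|_F^2$, where $\mathcal{O}$ is the set of $N\times N$ diagonal matrices with unit-modulus diagonal entries; that is, $\boldsymbol{\Omega}_*=\mathbf{I}_N$ maximizes the received SNR.
   Context: $\|\cdot\|$ is the Euclidean norm, $\|\cdot\|_F$ the Frobenius norm, $(\cdot)^H$ the conjugate transpose, $j=\sqrt{-1}$, and $\mathbf{I}_N$ the $N\times N$ identity matrix. *)

From HB Require Import structures.
From mathcomp Require Import all_boot all_order all_algebra.
From mathcomp Require Import complex.
From mathcomp Require Import reals trigo.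
Set Implicit Arguments. Unset Strict Implicit. Unset Printing Implicit Defensive.
Import Order.TTheory GRing.Theory Num.Theory.
Local Open Scope ring_scope.
Local Open Scope complex_scope.

Definition norm3 {R : realType} (v : 'rV[R]_3) : R :=
  Num.sqrt (\sum_(i < 3) v 0 i ^+ 2).

(* exp(-j x) = cos x - j sin x *)
Definition expmj {R : realType} (x : R) : R[i] := (cos x) +i* (- sin x).

Definition ctrmx {R : rcfType} m n (M : 'M[R[i]]_(m, n)) : 'M[R[i]]_(n, m) :=
  \matrix_(i, j) (M j i)^*.

Definition frob2 {R : rcfType} m n (M : 'M[R[i]]_(m, n)) : R[i] :=
  \sum_i \sum_j `|M i j| ^+ 2.

Definition ue_loc {R : realType} (r th : R) : 'rV[R]_3 :=
  \row_(i < 3) [:: r * cos th; r * sin th; 0]`_i.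

(* k-th UE antenna (0-based k): u + k d_u g, g = [0,1,0]^T *)
Definition ue_ant {R : realType} (r th du : R) (k : nat) : 'rV[R]_3 :=
  ue_loc r th + \row_(i < 3) [:: 0; k%:R * du; 0]`_i.

(* RIS element (0-based ny, nz): s + [0, ny d_y, nz d_z]^T *)
Definition ris_elt {R : realType} (s : 'rV[R]_3) (dy dz : R) (ny nz : nat)
  : 'rV[R]_3 :=
  s + \row_(i < 3) [:: 0; ny%:R * dy; nz%:R * dz]`_i.

(* UE-RIS channel, N = Ny*Nz elements, 0-based index n = ny * Nz + nz. *)
Definition chanA {R : realType} (lam du dy dz r th : R) (s : 'rV[R]_3)
  (K Ny Nz : nat) : 'M[R[i]]_(Ny * Nz, K) :=
  \matrix_(n, k) expmj (2 * pi * norm3 (ue_ant r th du k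
        - ris_elt s dy dz (n %/ Nz) (n %% Nz)) / lam).

Definition unit_diag {R : rcfType} N (W : 'M[R[i]]_N) : Prop :=
  is_diag_mx W /\ forall n, `|W n n| = 1.

(* Expanding the Frobenius norm along the diagonal of W gives
   ||A^H W A||_F^2 = sum_(n,m) w_n conj(w_m) |a_n^H a_m|^2, where a_n is the
   n-th row of A.  For unit-modulus w_n every term has modulus |a_n^H a_m|^2,
   so the triangle inequality bounds the sum by its value at W = I. *)
From HB Require Import structures.
From mathcomp Require Import all_boot all_order all_algebra.
From mathcomp Require Import complex.
From mathcomp Require Import reals trigo.
From mathcomp Require Import ring.
Import Order.TTheory GRing.Theory Num.Theory.
Local Open Scope ring_scope.
Local Open Scope complex_scope.

Section UnitDiagonalGain.
Variable R : rcfType.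
Local Notation C := R[i].

Lemma sqr_norm_sum (I : finType) (x : I -> C) :
  `|\sum_i x i| ^+ 2 = \sum_i \sum_j x i * (x j)^*.
Proof.
rewrite normCK rmorph_sum mulr_suml.
by apply: eq_bigr => i _; rewrite mulr_sumr.
Qed.

Lemma ctrmx_diag_mulmx_entry N K (A : 'M[C]_(N, K)) (W : 'M[C]_N) k l :
  is_diag_mx W ->
  (ctrmx A *m W *m A) k l = \sum_n (A n k)^* * W n n * A n l.
Proof.
move=> /is_diag_mxP W_diag; rewrite !mxE; apply: eq_bigr => n _.
rewrite !mxE (bigD1 n) //= big1 ?addr0 ?mxE // => m m_neq_n.
by rewrite W_diag ?mulr0.
Qed.

Lemma frob2_ctrmx_diag_mulmx N K (A : 'M[C]_(N, K)) (W : 'M[C]_N) :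
  is_diag_mx W ->
  frob2 (ctrmx A *m W *m A) =
    \sum_n \sum_m W n n * (W m m)^* * `|\sum_k (A n k)^* * A m k| ^+ 2.
Proof.
move=> W_diag; rewrite /frob2.
under eq_bigr => k _ do under eq_bigr => l _ do
  rewrite ctrmx_diag_mulmx_entry // sqr_norm_sum.
under eq_bigr => k _ do rewrite exchange_big.
rewrite exchange_big; apply: eq_bigr => n _.
under eq_bigr => k _ do rewrite exchange_big.
rewrite exchange_big; apply: eq_bigr => m _.
rewrite sqr_norm_sum mulr_sumr; apply: eq_bigr => k _.
rewrite mulr_sumr; apply: eq_bigr => l _.
rewrite !rmorphM /= !conjCK.
move: (A n k) (A m k) (A n l) (A m l) (W n n) (W m m) => a b c d w v.
move: (Num.conj a) (Num.conj d) (Num.conj v) => a' d' v'.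
ring.
Qed.

Lemma frob2_ge0 {m n} (M : 'M[C]_(m, n)) : 0 <= frob2 M.
Proof. by apply: sumr_ge0 => i _; apply: sumr_ge0 => j _; exact: exprn_ge0. Qed.

Lemma unit_diag1 {N} : unit_diag (1%:M : 'M[C]_N).
Proof.
split; first exact: scalar_mx_is_diag.
by move=> n; rewrite mxE eqxx normr1.
Qed.

Lemma frob2_ctrmx_unit_diag_le N K (A : 'M[C]_(N, K)) (W : 'M[C]_N) :
  unit_diag W -> frob2 (ctrmx A *m W *m A) <= frob2 (ctrmx A *m 1%:M *m A).
Proof.
move=> [W_diag W_unit].
rewrite -(ger0_norm (frob2_ge0 _)).
rewrite !frob2_ctrmx_diag_mulmx ?scalar_mx_is_diag //.
apply: le_trans (ler_norm_sum _ _ _) _; apply: ler_sum => n _.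
apply: le_trans (ler_norm_sum _ _ _) _; apply: ler_sum => m _.
rewrite !mxE !eqxx conjC1 !mul1r !normrM W_unit norm_conjC W_unit !mul1r.
by rewrite normr_id.
Qed.

End UnitDiagonalGain.

Theorem theorem1 (R : realType) (lam du dy dz : R) (K Ny Nz : nat)
  (s : 'rV[R]_3)
  (hlam : 0 < lam) (hdu : 0 < du) (hdy : 0 < dy) (hdz : 0 < dz)
  (hK : (0 < K)%N) (hNy : (0 < Ny)%N) (hNz : (0 < Nz)%N) :
  forall r th : R,
    let A := chanA lam du dy dz r th s K Ny Nz in
    unit_diag (1%:M : 'M[R[i]]_(Ny * Nz)) /\
    forall W : 'M[R[i]]_(Ny * Nz), unit_diag W ->
      frob2 (ctrmx A *m W *m A) <= frob2 (ctrmx A *m 1%:M *m A).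
Proof.
move=> r th A; split; first exact: unit_diag1.
by move=> W; exact: frob2_ctrmx_unit_diag_le.
Qed.
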